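(* Let $A\in\{0,1\}^{n\times n}$ be symmetric, let $t\in(0,1)$, $c_{A}=\sqrt{(1-t)/t}$, $c_{A^c}=\sqrt{t/(1-t)}$, $\lambda=\frac{1}{48\sqrt n}$, and let $Y^*$ be a cluster matrix as described in the context. Then $Y^*$ is the unique optimal solution of $$\max_{Y\in\mathbb{R}^{n\times n}}\ c_{A}\sum_{(i,j):a_{ij}=1}y_{ij}-c_{A^c}\sum_{(i,j):a_{ij}=0}y_{ij}-48\sqrt{n}\,\|Y\|_*\quad\text{s.t. } 0\le y_{ij}\le 1\ \ \forall i,j,$$ if there exist a matrix $W\in\mathbb{R}^{n\times n}$ and a number $0<\epsilon<1$ such that (a) $\|W\|\le 1$; (b) $\|P_T(W)\|_\infty\le \frac{\epsilon}{2}\lambda\min\{c_{A^c},c_{A}\}$; (c) $-(1+\epsilon)\lambda c_{A^c}-(U_0U_0^\top+W)_{ij}=0$ for all $(i,j)\in R\cap\mathcal{A}^c$; $-(1+\epsilon)\lambda c_{A}+w_{ij}=0$ for all $(i,j)\in R^c\cap\mathcal{A}$; $(1-\epsilon)\lambda c_{A}-(U_0U_0^\top+W)_{ij}\ge 0$ for all $(i,j)\in R\cap\mathcal{A}$; and $(1-\epsilon)\lambda c_{A^c}+w_{ij}\ge0$ for all $(i,j)\in R^c\cap\mathcal{A}^c$.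
   Context: Cluster matrix: the nodes $\{1,\dots,n\}$ contain a subset $V_1$ partitioned into disjoint clusters (remaining nodes are outliers), and $Y^*\in\{0,1\}^{n\times n}$ has $y^*_{ij}=1$ iff $i,j\in V_1$ lie in the same cluster (including $i=j\in V_1$), $0$ otherwise. $Y^*$ is symmetric positive semidefinite; write its compact eigen/singular value decomposition $Y^*=U_0\Sigma_0U_0^\top$ with $U_0$ having orthonormal columns. $P_T(M):=U_0U_0^\top M+MU_0U_0^\top-U_0U_0^\top MU_0U_0^\top$. $\mathcal{A}=\mathrm{support}(A)=\{(i,j):a_{ij}=1\}$, $R=\mathrm{support}(Y^* )$, and complements are taken in $\{1,\dots,n\}^2$. $\|W\|$ is the spectral norm, $\|M\|_\infty=\max_{ij}|m_{ij}|$, $\|\cdot\|_*$ the nuclear norm. *)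

From HB Require Import structures.
From mathcomp Require Import all_boot all_order all_algebra.
From mathcomp Require Import boolp classical_sets reals.
Set Implicit Arguments. Unset Strict Implicit. Unset Printing Implicit Defensive.
Import Order.TTheory GRing.Theory Num.Theory.
Local Open Scope ring_scope.
Local Open Scope classical_set_scope.

Section Defs.
Variable R : realType.

Definition vnorm2 (n : nat) (x : 'cV[R]_n) : R :=
  Num.sqrt (\sum_(i < n) x i 0 ^+ 2).

Definition specnorm (m n : nat) (W : 'M[R]_(m, n)) : R :=
  sup [set vnorm2 (W *m x) | x in [set x : 'cV[R]_n | vnorm2 x <= 1]].

(* Nuclear norm, as the dual norm of the spectral norm
   (equivalently, the sum of the singular values). *)
Definition nucnorm (m n : nat) (Y : 'M[R]_(m, n)) : R :=
  sup [set \tr (Y^T *m Z) | Z in [set Z : 'M[R]_(m, n) | specnorm Z <= 1]].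

Definition maxnorm (m n : nat) (M : 'M[R]_(m, n)) : R :=
  \big[Num.max/0]_(i < m) \big[Num.max/0]_(j < n) `|M i j|.

(* Cluster matrix: V1 is the set of clustered (non-outlier) nodes, and the
   clusters are the classes of V1 under the labeling [cl]. *)
Definition cluster_matrix (n : nat) (V1 : {set 'I_n}) (cl : 'I_n -> nat)
  : 'M[R]_n :=
  \matrix_(i, j) (((i \in V1) && (j \in V1) && (cl i == cl j))%:R).

Definition PT (n r : nat) (U0 : 'M[R]_(n, r)) (M : 'M[R]_n) : 'M[R]_n :=
  let P := U0 *m U0^T in P *m M + M *m P - P *m M *m P.

Definition objective (n : nat) (A : 'M[R]_n) (cA cAc : R) (Y : 'M[R]_n) : R :=
  cA * (\sum_(i < n) \sum_(j < n | A i j == 1) Y i j)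
  - cAc * (\sum_(i < n) \sum_(j < n | A i j == 0) Y i j)
  - 48 * Num.sqrt n%:R * nucnorm Y.

Definition feasible (n : nat) (Y : 'M[R]_n) : Prop :=
  forall i j, 0 <= Y i j <= 1.

End Defs.

From HB Require Import structures.
From mathcomp Require Import all_boot all_order all_algebra.
From mathcomp Require Import boolp classical_sets reals.
From mathcomp Require Import ring lra.
Set Implicit Arguments. Unset Strict Implicit. Unset Printing Implicit Defensive.
Import Order.TTheory GRing.Theory Num.Theory.
Local Open Scope ring_scope.
Local Open Scope classical_set_scope.

(* Dual certificate.  Put P := U0 U0^T, Q := 1 - P and Z := P + Q W Q.  As P and
   Q are complementary orthogonal projections, ||Z|| <= 1, and U0^T Z U0 = 1 gives
   <Y^*, Z> = sum_k s_k >= ||Y^*||_*, while <Y, Z> <= ||Y||_* for every Y by duality.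
   Moreover Z = P + W - P_T(W) and P vanishes wherever Y^* does, so (b) and (c)
   make each entry of lam G - Z, with G the weights of the linear part of the
   objective f, at least c := eps/2 lam min(cA, cAc) where Y^* is 1 and at most -c
   where Y^* is 0.  For feasible Y the entries of Y - Y^* are <= 0 on the first set
   and >= 0 on the second, hence
     lam [f Y - f Y^*] <= <lam G - Z, Y - Y^*> <= - c sum_ij abs [Y - Y^*]_ij,
   which is negative unless Y = Y^*. *)

Section MatrixNorms.
Variable R : realType.
Implicit Types (m n : nat).

Lemma ler_sum_term (I : finType) (F : I -> R) i :
  (forall j, 0 <= F j) -> F i <= \sum_j F j.
Proof.
by move=> F_ge0; rewrite (bigD1 i) //= lerDl sumr_ge0.
Qed.

Definition sqnorm n (x : 'cV[R]_n) : R := \sum_(i < n) x i 0 ^+ 2.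

Lemma sqnorm_ge0 n (x : 'cV[R]_n) : 0 <= sqnorm x.
Proof. by apply: sumr_ge0 => i _; rewrite sqr_ge0. Qed.

Lemma vnorm2_le1E n (x : 'cV[R]_n) : (vnorm2 x <= 1) = (sqnorm x <= 1).
Proof. by rewrite /vnorm2 -[X in _ <= X]sqrtr1 ler_sqrt. Qed.

Lemma sqnormE n (x : 'cV[R]_n) : sqnorm x = (x^T *m x) 0 0.
Proof. by rewrite !mxE; apply: eq_bigr => i _; rewrite !mxE expr2. Qed.

Lemma sqnorm0 n : sqnorm (0 : 'cV[R]_n) = 0.
Proof. by rewrite /sqnorm big1 // => i _; rewrite mxE expr0n. Qed.

Lemma sqnorm_eq0 n (x : 'cV[R]_n) : sqnorm x = 0 -> x = 0.
Proof.
move=> /eqP; rewrite psumr_eq0 => [/allP x0|i _]; last exact: sqr_ge0.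
apply/matrixP => i j; rewrite ord1 mxE.
by move/implyP: (x0 i (mem_index_enum _)) => /(_ isT); rewrite sqrf_eq0 => /eqP.
Qed.

Lemma sqnormZ n c (x : 'cV[R]_n) : sqnorm (c *: x) = c ^+ 2 * sqnorm x.
Proof. by rewrite /sqnorm mulr_sumr; apply: eq_bigr => i _; rewrite mxE exprMn. Qed.

Lemma sqnormD_orth n (x y : 'cV[R]_n) :
  x^T *m y = 0 -> sqnorm (x + y) = sqnorm x + sqnorm y.
Proof.
move=> xy0; have yx0 : y^T *m x = 0 by rewrite -[x]trmxK -trmx_mul xy0 trmx0.
rewrite !sqnormE [(x + y)^T]linearD /= mulmxDl !mulmxDr xy0 yx0 addr0 add0r.
by rewrite [LHS]mxE.
Qed.

Lemma sqnorm_delta n (j : 'I_n) : sqnorm (delta_mx j 0 : 'cV[R]_n) = 1.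
Proof. by rewrite sqnormE trmx_delta mul_delta_mx mxE !eqxx. Qed.

Lemma sqr_coord_le_sqnorm n (x : 'cV[R]_n) i : x i 0 ^+ 2 <= sqnorm x.
Proof. by apply: ler_sum_term => k; exact: sqr_ge0. Qed.

Lemma normr_coord_le1 n (x : 'cV[R]_n) i : sqnorm x <= 1 -> `|x i 0| <= 1.
Proof.
move=> x_le1; have := le_trans (sqr_coord_le_sqnorm x i) x_le1.
by rewrite -real_normK ?num_real // -[X in _ <= X](expr1n _ 2) ler_pXn2r ?nnegrE.
Qed.

Lemma trmx_mul_le_sqnorm_avg n (x y : 'cV[R]_n) :
  (x^T *m y) 0 0 <= (sqnorm x + sqnorm y) / 2.
Proof.
rewrite mxE /sqnorm -big_split mulr_suml; apply: ler_sum => i _ /=.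
by rewrite mxE; have := sqr_ge0 (x i 0 - y i 0); nra.
Qed.

Lemma maxnorm_ge_entry m n (M : 'M[R]_(m, n)) i j : `|M i j| <= maxnorm M.
Proof.
apply: le_trans (le_bigmax 0 (fun i => \big[Num.max/0]_j `|M i j|) i).
exact: (le_bigmax 0 (fun j => `|M i j|) j).
Qed.

Section SpectralNorm.
Variables m n : nat.
Implicit Types (W : 'M[R]_(m, n)) (x : 'cV[R]_n).

Let unit_ball_image W :=
  [set vnorm2 (W *m x) | x in [set x : 'cV[R]_n | vnorm2 x <= 1]].

Let unit_ball_image_has_sup W : has_sup (unit_ball_image W).
Proof.
split; first by exists (vnorm2 (W *m 0)); exists 0; rewrite //= vnorm2_le1E sqnorm0.
exists (Num.sqrt (\sum_i (\sum_j `|W i j|) ^+ 2)) => _ [x /= x_le1 <-].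
apply: ler_wsqrtr; apply: ler_sum => i _.
rewrite vnorm2_le1E in x_le1.
have Wx_le : `|(W *m x) i 0| <= \sum_j `|W i j|.
  rewrite mxE; apply: le_trans (ler_norm_sum _ _ _) _.
  apply: ler_sum => j _; rewrite normrM ler_piMr //.
  exact: normr_coord_le1.
rewrite -real_normK ?num_real // ler_pXn2r ?nnegrE //.
exact: le_trans Wx_le.
Qed.

Lemma specnorm_ge W x : vnorm2 x <= 1 -> vnorm2 (W *m x) <= specnorm W.
Proof. by move=> x_le1; apply: (sup_upper_bound (unit_ball_image_has_sup W)); exists x. Qed.

Lemma specnorm_le1 W :
  (forall x, sqnorm x <= 1 -> sqnorm (W *m x) <= 1) -> specnorm W <= 1.
Proof.
move=> W_contr; apply: ge_sup; first by case: (unit_ball_image_has_sup W).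
by move=> _ [x /= x_le1 <-]; rewrite vnorm2_le1E W_contr -?vnorm2_le1E.
Qed.

Lemma specnorm0_le1 : specnorm (0 : 'M[R]_(m, n)) <= 1.
Proof. by apply: specnorm_le1 => x _; rewrite mul0mx sqnorm0. Qed.

Lemma sqnorm_mul_le W x : specnorm W <= 1 -> sqnorm (W *m x) <= sqnorm x.
Proof.
move=> W_le1; have [->|x_ne0] := eqVneq x 0; first by rewrite mulmx0 !sqnorm0.
have x_gt0 : 0 < sqnorm x.
  by rewrite lt_def sqnorm_ge0 andbT; apply: contra_neq x_ne0; exact: sqnorm_eq0.
pose l := Num.sqrt (sqnorm x).
have l_gt0 : 0 < l by rewrite sqrtr_gt0.
have l2 : l ^+ 2 = sqnorm x by rewrite sqr_sqrtr // sqnorm_ge0.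
have y_le1 : vnorm2 (l^-1 *: x) <= 1.
  by rewrite vnorm2_le1E sqnormZ exprVn l2 mulVf ?gt_eqF.
have := le_trans (specnorm_ge W y_le1) W_le1.
by rewrite vnorm2_le1E -scalemxAr sqnormZ exprVn l2 mulrC ler_pdivrMr // mul1r.
Qed.

Lemma specnorm_entry_le1 W i j : specnorm W <= 1 -> `|W i j| <= 1.
Proof.
move=> W_le1; have := sqnorm_mul_le (delta_mx j 0) W_le1.
rewrite sqnorm_delta -colE => /(normr_coord_le1 i); by rewrite mxE.
Qed.

End SpectralNorm.

Definition mxdot m n (X Y : 'M[R]_(m, n)) : R := \tr (X^T *m Y).

Section Frobenius.
Variables m n : nat.
Implicit Types (X Y Z : 'M[R]_(m, n)).

Lemma mxdotE X Y : mxdot X Y = \sum_i \sum_j X i j * Y i j.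
Proof.
rewrite /mxdot /mxtrace exchange_big /=; apply: eq_bigr => i _.
by rewrite mxE; apply: eq_bigr => j _; rewrite mxE.
Qed.

Lemma mxdotC X Y : mxdot X Y = mxdot Y X.
Proof. by rewrite /mxdot -mxtrace_tr trmx_mul trmxK. Qed.

Lemma mxdotBl X Y Z : mxdot (X - Y) Z = mxdot X Z - mxdot Y Z.
Proof. by rewrite /mxdot linearB /= mulmxBl linearB. Qed.

Lemma mxdotBr X Y Z : mxdot X (Y - Z) = mxdot X Y - mxdot X Z.
Proof. by rewrite /mxdot mulmxBr linearB. Qed.

Lemma mxdotZl a X Y : mxdot (a *: X) Y = a * mxdot X Y.
Proof. by rewrite /mxdot linearZ /= -scalemxAl linearZ. Qed.

Lemma mxdot_lt0 c (M D : 'M[R]_(m, n)) :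
  0 < c -> D != 0 -> (forall i j, M i j * D i j <= - c * `|D i j|) ->
  mxdot M D < 0.
Proof.
move=> c_gt0 D_ne0 MD_le.
have /existsP [i0 /existsP [j0 Dij_ne0]] : [exists i, exists j, D i j != 0].
  apply: contraR D_ne0 => /existsPn D0; apply/eqP/matrixP => i j.
  by move/existsPn: (D0 i) => /(_ j) /negPn /eqP ->; rewrite mxE.
have D_gt0 : 0 < \sum_i \sum_j `|D i j|.
  apply: (lt_le_trans _ (ler_sum_term (F := fun i => \sum_j `|D i j|) i0 _)) => [|i].
    by apply: (lt_le_trans _ (ler_sum_term (F := fun j => `|D i0 j|) j0 _)); rewrite ?normr_gt0.
  exact: sumr_ge0.
rewrite mxdotE; apply: le_lt_trans (_ : _ <= - c * \sum_i \sum_j `|D i j|) _.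
  rewrite mulr_sumr; apply: ler_sum => i _; rewrite mulr_sumr; apply: ler_sum => j _.
  exact: MD_le.
by rewrite mulNr oppr_lt0 mulr_gt0.
Qed.

Let dual_ball_image Y :=
  [set \tr (Y^T *m Z) | Z in [set Z : 'M[R]_(m, n) | specnorm Z <= 1]].

Let dual_ball_image_has_sup Y : has_sup (dual_ball_image Y).
Proof.
split; first by exists (\tr (Y^T *m 0)); exists 0 => //=; exact: specnorm0_le1.
exists (\sum_i \sum_j `|Y i j|) => _ [Z /= Z_le1 <-].
rewrite -/(mxdot Y Z) mxdotE; apply: ler_sum => i _; apply: ler_sum => j _.
by rewrite (le_trans (ler_norm _)) // normrM ler_piMr ?specnorm_entry_le1.
Qed.

Lemma nucnorm_ge_mxdot Y Z : specnorm Z <= 1 -> mxdot Y Z <= nucnorm Y.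
Proof. by move=> Z_le1; apply: (sup_upper_bound (dual_ball_image_has_sup Y)); exists Z. Qed.

Lemma nucnorm_le Y b :
  (forall Z, specnorm Z <= 1 -> mxdot Y Z <= b) -> nucnorm Y <= b.
Proof.
move=> Y_le; apply: ge_sup; first by case: (dual_ball_image_has_sup Y).
by move=> _ [Z /= Z_le1 <-]; exact: Y_le.
Qed.

End Frobenius.
End MatrixNorms.

Section NuclearSubgradient.
Variables (R : realType) (n r : nat) (U : 'M[R]_(n, r)).
Hypothesis U_orth : U^T *m U = 1%:M.

Definition nuc_subgrad (W : 'M[R]_n) : 'M[R]_n :=
  U *m U^T + (1%:M - U *m U^T) *m W *m (1%:M - U *m U^T).

Let P := U *m U^T.
Let Q := 1%:M - P.

Let UtQ : U^T *m Q = 0.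
Proof. by rewrite /Q /P mulmxBr mulmx1 mulmxA U_orth mul1mx subrr. Qed.

Let trmx_projU : P^T = P.
Proof. by rewrite /P trmx_mul trmxK. Qed.

Lemma projU_orthC (x y : 'cV[R]_n) : (P *m x)^T *m (Q *m y) = 0.
Proof. by rewrite trmx_mul trmx_projU /P -!mulmxA (mulmxA U^T) UtQ mul0mx !mulmx0. Qed.

Lemma sqnorm_projU (x : 'cV[R]_n) : sqnorm x = sqnorm (P *m x) + sqnorm (Q *m x).
Proof. by rewrite -sqnormD_orth ?projU_orthC // -mulmxDl /Q addrC subrK mul1mx. Qed.

Lemma specnorm_nuc_subgrad W : specnorm W <= 1 -> specnorm (nuc_subgrad W) <= 1.
Proof.
move=> W_le1; apply: specnorm_le1 => x x_le1.
rewrite /nuc_subgrad -/P -/Q mulmxDl.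
rewrite -[Q *m W *m Q *m x]mulmxA -[Q *m W *m (Q *m x)]mulmxA.
rewrite sqnormD_orth ?projU_orthC //.
apply: le_trans x_le1; rewrite [leRHS]sqnorm_projU lerD2l.
apply: le_trans (sqnorm_mul_le (Q *m x) W_le1).
by rewrite [leRHS]sqnorm_projU lerDr sqnorm_ge0.
Qed.

Lemma nuc_subgrad_compress W : U^T *m nuc_subgrad W *m U = 1%:M.
Proof.
rewrite /nuc_subgrad -/P -/Q mulmxDr mulmxDl !mulmxA UtQ !mul0mx addr0.
by rewrite /P U_orth mul1mx U_orth.
Qed.

Lemma nuc_subgradE W : nuc_subgrad W = P + W - PT U W.
Proof.
rewrite /nuc_subgrad -/P -/Q.
have -> : Q *m W *m Q = W - P *m W - (W *m P - P *m W *m P).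
  by rewrite /Q mulmxBl mul1mx !mulmxBr !mulmx1 mulmxBl.
by rewrite /PT /= -/P !opprD !opprK !addrA.
Qed.

Lemma compress_diag_le1 (Z : 'M[R]_n) k :
  specnorm Z <= 1 -> (U^T *m Z *m U) k k <= 1.
Proof.
move=> Z_le1; pose u := col k U.
have uT : u^T = delta_mx 0 k *m U^T by rewrite /u colE trmx_mul trmx_delta.
have entry (M : 'M[R]_r) : (delta_mx 0 k *m M *m delta_mx k 0 : 'M[R]_1) 0 0 = M k k.
  by rewrite -rowE -colE !mxE.
have u1 : sqnorm u = 1.
  by rewrite sqnormE uT /u colE mulmxA -(mulmxA _ U^T) U_orth entry mxE eqxx.
have -> : (U^T *m Z *m U) k k = (u^T *m (Z *m u)) 0 0.
  by rewrite -entry uT /u colE !mulmxA.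
apply: le_trans (trmx_mul_le_sqnorm_avg _ _) _.
by have := sqnorm_mul_le u Z_le1; rewrite u1; lra.
Qed.

Variable s : 'rV[R]_r.
Hypothesis s_gt0 : forall k, 0 < s 0 k.

Lemma mxdot_factor (Z : 'M[R]_n) :
  mxdot (U *m diag_mx s *m U^T) Z = \sum_k s 0 k * (U^T *m Z *m U) k k.
Proof.
rewrite /mxdot; have -> : (U *m diag_mx s *m U^T)^T = U *m diag_mx s *m U^T.
  by rewrite !trmx_mul trmxK tr_diag_mx mulmxA.
rewrite -!mulmxA mxtrace_mulC -mulmxA mul_diag_mx /mxtrace.
by apply: eq_bigr => k _; rewrite mxE !mulmxA.
Qed.

Lemma nucnorm_factor_le_subgrad W :
  nucnorm (U *m diag_mx s *m U^T) <= mxdot (U *m diag_mx s *m U^T) (nuc_subgrad W).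
Proof.
apply: nucnorm_le => Z Z_le1; rewrite !mxdot_factor nuc_subgrad_compress.
apply: ler_sum => k _; rewrite [1%:M k k]mxE eqxx mulr1 ler_piMr ?compress_diag_le1 //.
exact: ltW.
Qed.

End NuclearSubgradient.

Section ClusterMatrix.
Variables (R : realType) (n : nat) (V1 : {set 'I_n}) (cl : 'I_n -> nat).
Let Ys := cluster_matrix R V1 cl.

Lemma cluster_matrix01 i j : Ys i j = 0 \/ Ys i j = 1.
Proof. by rewrite mxE; case: (_ && _ && _); [right|left]. Qed.

Lemma cluster_matrix_mul_entry i l j : Ys i l * Ys l j = Ys i j * Ys l j.
Proof.
rewrite !mxE; have [->|cl_ne] := eqVneq (cl l) (cl j); last by rewrite !andbF !mulr0.
by case: (i \in V1); case: (l \in V1); case: (j \in V1); rewrite ?mul0r ?mulr0.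
Qed.

(* Cluster sizes; outlier columns get weight 1 so that all weights are positive. *)
Definition cluster_weight : 'rV[R]_n :=
  \row_j (if j \in V1 then \sum_l Ys l j else 1).

Lemma cluster_weight_gt0 j : 0 < cluster_weight 0 j.
Proof.
rewrite mxE; case: ifP => // j_V1.
apply: (lt_le_trans _ (ler_sum_term (F := fun l => Ys l j) j _)) => [|l].
  by rewrite mxE j_V1 eqxx.
by rewrite mxE ler0n.
Qed.

Lemma cluster_matrix_sqr : Ys *m Ys = Ys *m diag_mx cluster_weight.
Proof.
apply/matrixP => i j; rewrite mul_mx_diag !mxE.
under eq_bigr do rewrite cluster_matrix_mul_entry.
by rewrite -mulr_sumr; case: ifP => j_V1; rewrite [Ys i j]mxE j_V1 ?andbT ?andbF ?mul0r.
Qed.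

Variables (r : nat) (U : 'M[R]_(n, r)) (s : 'rV[R]_r).
Hypothesis U_orth : U^T *m U = 1%:M.
Hypothesis s_gt0 : forall k, 0 < s 0 k.
Hypothesis Ys_factor : Ys = U *m diag_mx s *m U^T.

(* diag s U^T (Ys - diag w) = U^T (Ys Ys - Ys diag w) = 0, and s > 0. *)
Lemma cluster_matrix_projE : Ys = U *m U^T *m diag_mx cluster_weight.
Proof.
have UtYs : U^T *m Ys = diag_mx s *m U^T by rewrite Ys_factor !mulmxA U_orth mul1mx.
have UtYs_weight : U^T *m (Ys - diag_mx cluster_weight) = 0.
  have s_ker : diag_mx s *m (U^T *m (Ys - diag_mx cluster_weight)) = 0.
    by rewrite mulmxA -UtYs -mulmxA mulmxBr cluster_matrix_sqr subrr mulmx0.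
  apply/matrixP => k l; move/matrixP/(_ k l): s_ker; rewrite mul_diag_mx !mxE.
  by move/eqP; rewrite mulf_eq0 gt_eqF //= => /eqP.
have projYs : U *m U^T *m Ys = Ys by rewrite -mulmxA UtYs Ys_factor !mulmxA.
apply/eqP; rewrite -subr_eq0 -{1}projYs -!mulmxA -mulmxBr.
by rewrite -mulmxBr UtYs_weight mulmx0.
Qed.

Lemma cluster_matrix_eq0_proj i j : Ys i j = 0 -> (U *m U^T) i j = 0.
Proof.
rewrite {1}cluster_matrix_projE mul_mx_diag mxE => /eqP.
by rewrite mulf_eq0 (gt_eqF (cluster_weight_gt0 j)) orbF => /eqP.
Qed.

End ClusterMatrix.

Section CertificateEntry.
Variables (R : realType) (lam cA cAc eps : R).
Hypotheses (lam_gt0 : 0 < lam) (eps_gt0 : 0 < eps).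
Let c := eps / 2 * lam * Num.min cAc cA.

Lemma certificate_entry (a ys p w pt : R) :
  a = 0 \/ a = 1 -> (ys = 0 -> p = 0) -> `|pt| <= c ->
  (ys = 1 -> a = 0 -> - (1 + eps) * lam * cAc - (p + w) = 0) ->
  (ys = 0 -> a = 1 -> - (1 + eps) * lam * cA + w = 0) ->
  (ys = 1 -> a = 1 -> 0 <= (1 - eps) * lam * cA - (p + w)) ->
  (ys = 0 -> a = 0 -> 0 <= (1 - eps) * lam * cAc + w) ->
  let mu := lam * (if a == 1 then cA else - cAc) - (p + w - pt) in
  (ys = 1 -> c <= mu) /\ (ys = 0 -> mu <= - c).
Proof.
move=> a01 p0 pt_le c1 c2 c3 c4 mu; move: pt_le; rewrite ler_norml => /andP [pt_ge pt_le].
have min_cAc : eps * lam * Num.min cAc cA <= eps * lam * cAc.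
  by rewrite ler_wpM2l ?ge_min ?lexx // mulr_ge0 // ltW.
have min_cA : eps * lam * Num.min cAc cA <= eps * lam * cA.
  by rewrite ler_wpM2l ?ge_min ?lexx ?orbT // mulr_ge0 // ltW.
rewrite /mu /c in pt_ge pt_le *.
split=> ys_val; case: a01 => a_val; rewrite a_val ?eqxx ?(eq_sym 0 1) ?oner_eq0.
- by have := c1 ys_val a_val; lra.
- by have := c3 ys_val a_val; lra.
- by rewrite (p0 ys_val); have := c4 ys_val a_val; lra.
- by rewrite (p0 ys_val); have := c2 ys_val a_val; lra.
Qed.

End CertificateEntry.

Lemma mul_le_oppr_norm (R : realType) (mu d c : R) :
  (c <= mu /\ d <= 0) \/ (mu <= - c /\ 0 <= d) -> mu * d <= - c * `|d|.
Proof. by case=> [[? d_le0]|[? d_ge0]]; [rewrite ler0_norm | rewrite ger0_norm]; nra. Qed.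

Definition objective_weights (R : realType) n (A : 'M[R]_n) (cA cAc : R) : 'M[R]_n :=
  \matrix_(i, j) (if A i j == 1 then cA else - cAc).

Lemma objectiveE (R : realType) n (A : 'M[R]_n) cA cAc X :
  (forall i j, A i j = 0 \/ A i j = 1) ->
  objective A cA cAc X =
    mxdot (objective_weights A cA cAc) X - 48 * Num.sqrt n%:R * nucnorm X.
Proof.
move=> A01; congr (_ - _); rewrite mxdotE !mulr_sumr -sumrB; apply: eq_bigr => i _.
rewrite [RHS](bigID (fun j => A i j == 1)) /= !mulr_sumr -sumrN; congr (_ + _).
  by apply: eq_bigr => j /eqP A1; rewrite mxE A1 eqxx.
apply: eq_big => [j|j /eqP A0]; last by rewrite mxE A0 (eq_sym 0 1) oner_eq0 mulNr.
by case: (A01 i j) => ->; rewrite ?eqxx ?(eq_sym 0 1) ?oner_eq0.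
Qed.

Section DualCertificate.
Variables (R : realType) (n r : nat) (A : 'M[R]_n) (V1 : {set 'I_n}) (cl : 'I_n -> nat).
Variables (U : 'M[R]_(n, r)) (s : 'rV[R]_r) (W : 'M[R]_n) (lam cA cAc eps : R).
Let Ys := cluster_matrix R V1 cl.
Let P := U *m U^T.
Let Z := nuc_subgrad U W.
Let c := eps / 2 * lam * Num.min cAc cA.

Hypothesis A01 : forall i j, A i j = 0 \/ A i j = 1.
Hypothesis U_orth : U^T *m U = 1%:M.
Hypothesis s_gt0 : forall k, 0 < s 0 k.
Hypothesis Ys_factor : Ys = U *m diag_mx s *m U^T.
Hypotheses (lam_gt0 : 0 < lam) (eps_gt0 : 0 < eps).
Hypotheses (cA_gt0 : 0 < cA) (cAc_gt0 : 0 < cAc).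
Hypothesis PT_small : maxnorm (PT U W) <= c.
Hypothesis cert : forall i j,
  [/\ (Ys i j = 1 -> A i j = 0 -> - (1 + eps) * lam * cAc - (P + W) i j = 0),
      (Ys i j = 0 -> A i j = 1 -> - (1 + eps) * lam * cA + W i j = 0),
      (Ys i j = 1 -> A i j = 1 -> 0 <= (1 - eps) * lam * cA - (P + W) i j) &
      (Ys i j = 0 -> A i j = 0 -> 0 <= (1 - eps) * lam * cAc + W i j)].

Lemma dual_certificate_entry i j (y : R) : 0 <= y <= 1 ->
  (lam * objective_weights A cA cAc i j - Z i j) * (y - Ys i j)
    <= - c * `|y - Ys i j|.
Proof.
move=> /andP [y_ge0 y_le1].
have [c1 c2 c3 c4] := cert i j; rewrite [(P + W) i j]mxE in c1 c3.
have PT_le : `|PT U W i j| <= c := le_trans (maxnorm_ge_entry _ i j) PT_small.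
have P0 : Ys i j = 0 -> P i j = 0 by exact: cluster_matrix_eq0_proj.
have [mu_ge mu_le] := certificate_entry lam_gt0 eps_gt0 (A01 i j) P0 PT_le c1 c2 c3 c4.
have -> : Z i j = P i j + W i j - PT U W i j.
  by rewrite /Z nuc_subgradE -/P [LHS]mxE [(P + W) i j]mxE [(- PT U W) i j]mxE.
rewrite [objective_weights _ _ _ i j]mxE; apply: mul_le_oppr_norm.
case: (cluster_matrix01 R V1 cl i j) => Ys_val; [right | left]; rewrite -/Ys Ys_val.
- by split; [exact: mu_le | rewrite subr0].
- by split; [exact: mu_ge | rewrite subr_le0].
Qed.

Lemma dual_certificate_gap (Y : 'M[R]_n) : feasible Y -> Y != Ys ->
  mxdot (lam *: objective_weights A cA cAc - Z) (Y - Ys) < 0.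
Proof.
move=> Y_feas Y_ne; apply: (@mxdot_lt0 _ _ _ c) => [|| i j]; last 1 first.
- have -> : (lam *: objective_weights A cA cAc - Z) i j =
      lam * objective_weights A cA cAc i j - Z i j by rewrite !mxE.
  have -> : (Y - Ys) i j = Y i j - Ys i j by rewrite !mxE.
  exact: dual_certificate_entry.
- by rewrite /c (mulr_gt0 (mulr_gt0 _ lam_gt0)) ?divr_gt0 // lt_min cA_gt0 cAc_gt0.
- by rewrite subr_eq0.
Qed.

End DualCertificate.

Theorem proposition1 (R : realType) (n : nat) (A : 'M[R]_n) (t : R)
  (V1 : {set 'I_n}) (cl : 'I_n -> nat)
  (r : nat) (U0 : 'M[R]_(n, r)) (s : 'rV[R]_r) :
  (forall i j, A i j = 0 \/ A i j = 1) ->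
  A^T = A ->
  0 < t < 1 ->
  U0^T *m U0 = 1%:M ->
  (forall k, 0 < s 0 k) ->
  cluster_matrix R V1 cl = U0 *m diag_mx s *m U0^T ->
  let Ystar := cluster_matrix R V1 cl in
  let cA := Num.sqrt ((1 - t) / t) in
  let cAc := Num.sqrt (t / (1 - t)) in
  let lam := 1 / (48 * Num.sqrt n%:R) in
  let P := U0 *m U0^T in
  (exists (W : 'M[R]_n) (eps : R),
     [/\ 0 < eps < 1,
         specnorm W <= 1,
         maxnorm (PT U0 W) <= eps / 2 * lam * Num.min cAc cA &
         forall i j,
           [/\ (Ystar i j = 1 -> A i j = 0 ->
                  - (1 + eps) * lam * cAc - (P + W) i j = 0),
               (Ystar i j = 0 -> A i j = 1 ->
                  - (1 + eps) * lam * cA + W i j = 0),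
               (Ystar i j = 1 -> A i j = 1 ->
                  0 <= (1 - eps) * lam * cA - (P + W) i j) &
               (Ystar i j = 0 -> A i j = 0 ->
                  0 <= (1 - eps) * lam * cAc + W i j)]]) ->
  feasible Ystar /\
  (forall Y : 'M[R]_n, feasible Y -> Y <> Ystar ->
     objective A cA cAc Y < objective A cA cAc Ystar).
Proof.
move=> A01 _ /andP [t_gt0 t_lt1] U_orth s_gt0 Ys_factor Ys cA cAc lam P.
move=> [W [eps [/andP [eps_gt0 _] W_le1 PT_small cert]]].
split=> [i j | Y Y_feas /eqP Y_ne].
  by case: (cluster_matrix01 R V1 cl i j) => ->; rewrite lexx ler01.
have n_gt0 : (0 < n)%N.
  case: posnP => // n0; case/eqP: Y_ne; apply/matrixP => i.
  by move: (ltn_ord i); rewrite {2}n0.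
have lam_gt0 : 0 < lam by rewrite /lam div1r invr_gt0 mulr_gt0 ?sqrtr_gt0 ?ltr0n.
have cA_gt0 : 0 < cA by rewrite sqrtr_gt0 divr_gt0 ?subr_gt0.
have cAc_gt0 : 0 < cAc by rewrite sqrtr_gt0 divr_gt0 ?subr_gt0.
set Z := nuc_subgrad U0 W.
have gap := dual_certificate_gap A01 U_orth s_gt0 Ys_factor lam_gt0 eps_gt0
  cA_gt0 cAc_gt0 PT_small cert Y_feas Y_ne.
have nucY := nucnorm_ge_mxdot Y (specnorm_nuc_subgrad U_orth W_le1).
have nucYs : nucnorm Ys <= mxdot Ys Z.
  by rewrite /Ys Ys_factor; exact: nucnorm_factor_le_subgrad.
move: gap; rewrite mxdotBl mxdotZl !mxdotBr (mxdotC Z Y) (mxdotC Z Ys) => gap.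
rewrite !objectiveE //; have -> : 48 * Num.sqrt n%:R = lam^-1 by rewrite /lam div1r invrK.
rewrite -(ltr_pM2l lam_gt0) !mulrBr !mulrA mulfV ?gt_eqF // !mul1r.
lra.
Qed.
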